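(* Let $p$ be an odd prime and $m$ a positive integer not divisible by $p$. Then $$\sum_{r=1}^m rK_p(r,m)\equiv-q_p(m)\pmod p,$$ where $K_p(r,m)=\sum_{1\le k\le p-1,\ m\mid k-rp}\frac1k$ and $q_p(m)=(m^{p-1}-1)/p$ is the Fermat quotient.
   Context: Congruences modulo $p$ are between rational numbers whose denominators are prime to $p$. *)

From mathcomp Require Import all_boot all_order all_algebra.
Set Implicit Arguments. Unset Strict Implicit. Unset Printing Implicit Defensive.
Import Order.TTheory GRing.Theory Num.Theory.
Local Open Scope ring_scope.

Definition p_integral (p : nat) (z : rat) : bool := coprime p `|denq z|%N.

Definition rat_congr (p : nat) (x y : rat) : Prop :=
  p_integral p x /\ p_integral p y /\
  exists z : rat, p_integral p z /\ x - y = p%:R * z.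

Definition Kp (p r m : nat) : rat :=
  \sum_(1 <= k < p | (m%:Z %| k%:Z - r%:Z * p%:Z)%Z) (k%:R)^-1.

Definition fermat_quotient (p m : nat) : rat :=
  ((m%:R) ^+ p.-1 - 1) / p%:R.

From HB Require Import structures.
From mathcomp Require Import all_boot all_order all_algebra.
From mathcomp Require Import zify ring.
Import Order.TTheory GRing.Theory Num.Theory.
Local Open Scope ring_scope.
Set Implicit Arguments.
Unset Strict Implicit.

(* For 1 <= j <= p-1 write jm = f_j p + rho_j with 0 < rho_j < p.  The pairs
   (r, k) with 1 <= r <= m, 1 <= k <= p-1 and m | rp - k are exactly the
   pairs with jm + k = rp, i.e. r = f_j + 1 and k = p - rho_j, so the sum is
   sum_j (f_j + 1) / (p - rho_j).  Modulo p, 1/(p - rho_j) = -1/rho_j; the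
   rho_j run over 1..p-1 and the harmonic sum vanishes mod p for odd p, which
   leaves -sum_j f_j / rho_j.  This is -q_p(m) by Lerch's argument: comparing
   prod_j jm = m^(p-1) (p-1)! with prod_j (rho_j + p f_j) =
   (p-1)! prod_j (1 + p f_j / rho_j) gives m^(p-1) = 1 + p sum_j f_j / rho_j
   modulo p^2. *)

Lemma p_integral_frac (p : nat) (a : int) (b : nat) :
  coprime p b -> p_integral p (a%:~R / b%:R).
Proof.
move=> pb; have [->|b0] := eqVneq b 0%N; first by rewrite mulr0n invr0 mulr0; exact: coprimen1.
rewrite [b%:R]pmulrn; move Ed: b%:Z => d; move: Ed.
case: divqP => [_ /eqP|k x _ Ekb]; first by rewrite eqz_nat (negPf b0).
by apply: coprime_dvdr pb; apply/dvdnP; exists `|k|%N; rewrite -abszM -Ekb.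
Qed.

Lemma p_integralP (p : nat) (z : rat) :
  reflect (exists a : int, exists2 b : nat, (0 < b)%N && coprime p b & z = a%:~R / b%:R)
          (p_integral p z).
Proof.
apply: (iffP idP) => [pz|[a [b /andP[_ pb] ->]]]; last exact: p_integral_frac.
exists (numq z), `|denq z|%N; first by rewrite absz_gt0 denq_neq0.
by rewrite [_%:R]pmulrn absz_denq divq_num_den.
Qed.

Fact p_integral_subring_closed (p : nat) : subring_closed (p_integral p).
Proof.
split.
- exact: coprimen1.
- move=> _ _ /p_integralP[a [b /andP[b0 pb] ->]] /p_integralP[c [d /andP[d0 pd] ->]].
  have -> : a%:~R / b%:R - c%:~R / d%:R = (a * d - c * b)%:~R / (b * d)%:R :> rat.
    rewrite natrM intrB !intrM !pmulrn; field.
    by rewrite !pnatr_eq0 -!lt0n b0 d0.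
  by apply/idP/p_integral_frac; rewrite coprimeMr pb pd.
- move=> _ _ /p_integralP[a [b /andP[b0 pb] ->]] /p_integralP[c [d /andP[d0 pd] ->]].
  rewrite mulrACA -invfM -intrM -natrM.
  by apply/idP/p_integral_frac; rewrite coprimeMr pb pd.
Qed.

HB.instance Definition _ (p : nat) :=
  GRing.isSubringClosed.Build rat (p_integral p) (p_integral_subring_closed p).

(* Turns [p_integral] goals into membership, the form the [rpred] lemmas rewrite. *)
Lemma p_integralE (p : nat) (x : rat) : p_integral p x = (x \in p_integral p).
Proof. by []. Qed.

Lemma p_integralVn (p n : nat) : coprime p n -> p_integral p n%:R^-1.
Proof. by move=> pn; rewrite -[_^-1]div1r -[1]/(1%:~R); exact: p_integral_frac. Qed.

Section RatCongruence.
Variable p : nat.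

Lemma rat_congr_addr x z :
  p_integral p x -> p_integral p z -> rat_congr p (x + p%:R * z) x.
Proof.
move=> px pz; split; last split => //; last by exists z; rewrite addrAC subrr add0r.
by rewrite p_integralE rpredD ?rpredM ?rpred_nat.
Qed.

Lemma rat_congr_refl x : p_integral p x -> rat_congr p x x.
Proof. by move=> px; have := rat_congr_addr px (rpred0 _); rewrite mulr0 addr0. Qed.

Lemma rat_congr_sym x y : rat_congr p x y -> rat_congr p y x.
Proof.
move=> [px [py [z [pz Exy]]]]; do 2!split => //.
by exists (- z); split; [apply: rpredNr | rewrite mulrN -Exy opprB].
Qed.

Lemma rat_congr_trans x y t : rat_congr p x y -> rat_congr p y t -> rat_congr p x t.
Proof.
move=> [px [_ [z [pz Exy]]]] [_ [pt [w [pw Eyt]]]]; do 2!split => //.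
exists (z + w); split; first exact: rpredD.
by rewrite mulrDr -Exy -Eyt addrA subrK.
Qed.

Lemma rat_congrD x1 y1 x2 y2 :
  rat_congr p x1 y1 -> rat_congr p x2 y2 -> rat_congr p (x1 + x2) (y1 + y2).
Proof.
move=> [px1 [py1 [z1 [pz1 E1]]]] [px2 [py2 [z2 [pz2 E2]]]].
split; [exact: rpredD | split; first exact: rpredD].
exists (z1 + z2); split; first exact: rpredD.
by rewrite mulrDr -E1 -E2 opprD addrACA.
Qed.

Lemma rat_congrN x y : rat_congr p x y -> rat_congr p (- x) (- y).
Proof.
move=> [px [py [z [pz Exy]]]].
split; [exact: rpredNr | split; first exact: rpredNr].
by exists (- z); split; [apply: rpredNr | rewrite mulrN -Exy opprB opprK addrC].
Qed.

Lemma rat_congrM x1 y1 x2 y2 :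
  rat_congr p x1 y1 -> rat_congr p x2 y2 -> rat_congr p (x1 * x2) (y1 * y2).
Proof.
move=> [px1 [py1 [z1 [pz1 E1]]]] [px2 [py2 [z2 [pz2 E2]]]].
split; [exact: rpredM | split; first exact: rpredM].
exists (x1 * z2 + z1 * y2); split; first by apply: rpredD; apply: rpredM.
have -> : x1 * x2 - y1 * y2 = x1 * (x2 - y2) + (x1 - y1) * y2 by ring.
by rewrite E1 E2; ring.
Qed.

Lemma rat_congr_sum (I : eqType) (s : seq I) (P : pred I) (F G : I -> rat) :
  (forall i, i \in s -> P i -> rat_congr p (F i) (G i)) ->
  rat_congr p (\sum_(i <- s | P i) F i) (\sum_(i <- s | P i) G i).
Proof.
move=> FG; rewrite !(big_seq_cond P).
apply: (big_ind2 (rat_congr p)) => [||i /andP[]]; [|exact: rat_congrD|exact: FG].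
exact/rat_congr_refl/rpred0.
Qed.

End RatCongruence.

Lemma prime_coprime_lt (p n : nat) : prime p -> (0 < n < p)%N -> coprime p n.
Proof. by move=> pp /andP[n0 np]; rewrite prime_coprime // gtnNdvd. Qed.

Lemma rat_congr_inv_subn (p r : nat) :
  prime p -> (0 < r < p)%N -> rat_congr p (p - r)%N%:R^-1 (- r%:R^-1).
Proof.
move=> pp hr.
have pr := prime_coprime_lt pp hr.
have ppr : coprime p (p - r) by apply: prime_coprime_lt; lia.
have -> : (p - r)%N%:R^-1 = - r%:R^-1 + p%:R * (r * (p - r))%N%:R^-1 :> rat.
  rewrite natrM natrB; last lia.
  by field; rewrite -natrB ?subr_eq0 ?pnatr_eq0 -?lt0n; lia.
apply: rat_congr_addr; first exact/rpredNr/p_integralVn.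
by apply: p_integralVn; rewrite coprimeMr pr ppr.
Qed.

Lemma harmonic_sum_congr0 (p : nat) :
  prime p -> odd p -> rat_congr p (\sum_(1 <= k < p) k%:R^-1) 0.
Proof.
move=> pp p_odd; set H := \sum_(1 <= k < p) _.
have pH : p_integral p H.
  rewrite /H big_seq; apply: rpred_sum => k; rewrite mem_index_iota => hk.
  exact/p_integralVn/prime_coprime_lt.
have HN : rat_congr p H (- H).
  rewrite {1}/H big_nat_rev -sumrN; apply: rat_congr_sum => k; rewrite mem_index_iota => hk _.
  by rewrite add1n subSS; apply: rat_congr_inv_subn.
have H2 : rat_congr p (H + H) 0 by rewrite -(addNr H); apply: rat_congrD => //; exact: rat_congr_refl.
have p2 : p_integral p 2%:R^-1.
  by apply: p_integralVn; rewrite prime_coprime // dvdn_prime2 //; case: eqP p_odd => // ->.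
have := rat_congrM (rat_congr_refl p2) H2.
by rewrite mulr0 mulrC -mulr2n -[H *+ 2]mulr_natr mulfK ?pnatr_eq0.
Qed.

Lemma prod_1Dp_expansion (p : nat) (I : eqType) (s : seq I) (x : I -> rat) :
  {in s, forall i, p_integral p (x i)} ->
  exists2 w, p_integral p w &
    \prod_(i <- s) (1 + p%:R * x i) = 1 + p%:R * \sum_(i <- s) x i + p%:R ^+ 2 * w.
Proof.
elim: s => [_|a s IHs px]; first by exists 0; [exact: rpred0 | rewrite !big_nil; ring].
rewrite big_cons; have [|w pw ->] := IHs; first by move=> i si; apply: px; rewrite mem_behead.
exists (x a * \sum_(i <- s) x i + w + p%:R * x a * w); last by rewrite big_cons; ring.
have pa : p_integral p (x a) by apply: px; rewrite mem_head.
have ps : p_integral p (\sum_(i <- s) x i).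
  by rewrite big_seq; apply: rpred_sum => i si; apply: px; rewrite mem_behead.
by rewrite p_integralE !(rpredD, rpredM, rpred_nat).
Qed.

Lemma big_nat_pred1 (R : Type) (idx : R) (op : Monoid.law idx) (a b i : nat)
    (P : pred nat) (F : nat -> R) :
  (a <= i < b)%N -> (forall j, (a <= j < b)%N -> P j = (j == i)) ->
  \big[op/idx]_(a <= j < b | P j) F j = F i.
Proof.
move=> hi Pi; rewrite big_nat_cond (eq_bigl (fun j => (a <= j < b)%N && (j == i))).
  by rewrite -big_nat_cond big_nat1_eq hi.
by move=> j /=; case: (boolP (a <= j < b)%N) => //= /Pi.
Qed.

Lemma eq_next_multiple (p f rho k r : nat) : (0 < rho < p)%N -> (0 < k < p)%N ->
  (f * p + rho + k == r * p)%N = (r == f.+1) && (k == p - rho)%N.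
Proof.
move=> hrho hk; apply/eqP/andP => [e|[/eqP -> /eqP ->]]; last by rewrite mulSn; lia.
have fr : (f < r)%N by rewrite -(ltn_pmul2r (_ : 0 < p)%N); lia.
have rf : (r < f.+2)%N by rewrite -(ltn_pmul2r (_ : 0 < p)%N) ?mulSn; lia.
have er : r = f.+1 by lia.
by move: e; rewrite er mulSn => e; split; apply/eqP; lia.
Qed.

Lemma dvdz_subn (d k n : nat) : (k <= n)%N -> (d%:Z %| k%:Z - n%:Z)%Z = (d %| n - k)%N.
Proof. by move=> kn; rewrite -opprB subzn // dvdzE abszN. Qed.

Lemma Kp_quotient_sum (p r m : nat) : (0 < m)%N -> (0 < r <= m)%N ->
  Kp p r m = \sum_(1 <= k < p) \sum_(1 <= j < p | (j * m + k == r * p)%N) k%:R^-1.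
Proof.
move=> m0 /andP[r0 rm]; rewrite /Kp big_mkcond; apply: eq_big_nat => k /andP[k0 kp] /=.
have k_lt_rp : (k < r * p)%N by apply: leq_trans kp (leq_pmull _ r0).
rewrite -PoszM (dvdz_subn _ (ltnW k_lt_rp)); case: ifPn => [/dvdnP[q Eq] | ndvd].
  have q_gt0 : (0 < q)%N by move: Eq; case: q => // Eq; lia.
  have q_lt_p : (q < p)%N.
    by have := leq_mul rm (leqnn p); rewrite -(ltn_pmul2r m0) -Eq; lia.
  rewrite (@big_nat_pred1 _ _ _ _ _ q) ?q_gt0 //.
  move=> j _; apply/eqP/eqP => [E|->]; last lia.
  by apply/eqP; rewrite -(eqn_pmul2r m0); apply/eqP; lia.
rewrite big1 // => j /eqP E; case/negP: ndvd; apply/dvdnP; exists j; lia.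
Qed.

Section Residues.
Variables p m : nat.
Hypotheses (p_pr : prime p) (p_ndvd_m : ~~ (p %| m)%N).

Lemma residue_gt0 j : (0 < j < p)%N -> (0 < (j * m) %% p)%N.
Proof.
move=> /andP[j0 jp]; rewrite lt0n -/(dvdn p (j * m)) Euclid_dvdM //.
by rewrite (negPf p_ndvd_m) gtnNdvd.
Qed.

Lemma residue_range j : (0 < j < p)%N -> (0 < (j * m) %% p < p)%N.
Proof. by move=> hj; rewrite residue_gt0 // ltn_mod prime_gt0. Qed.

Lemma residue_inj : {in index_iota 1 p &, injective (fun j => (j * m) %% p)%N}.
Proof.
move=> a b; rewrite !mem_index_iota.
wlog le_ab : a b / (a <= b)%N => [hw ha hb E|ha hb E].
  by case: (leqP a b) => [|/ltnW] h; [|apply/esym]; apply: hw.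
have : (p %| (b - a) * m)%N by rewrite mulnBl -eqn_mod_dvd ?leq_mul2r ?le_ab ?orbT // E.
rewrite Euclid_dvdM // (negPf p_ndvd_m) orbF.
by case: (posnP (b - a)) => [|h /(dvdn_leq h)]; lia.
Qed.

Lemma perm_residues : perm_eq [seq (j * m) %% p | j <- index_iota 1 p]%N (index_iota 1 p).
Proof.
have uniq_res : uniq [seq (j * m) %% p | j <- index_iota 1 p]%N.
  by rewrite map_inj_in_uniq ?iota_uniq //; exact: residue_inj.
have sub_res : {subset [seq (j * m) %% p | j <- index_iota 1 p]%N <= index_iota 1 p}.
  by move=> x /mapP[j]; rewrite !mem_index_iota => /residue_range ? ->.
have [_ eq_res] := uniq_min_size uniq_res sub_res (eq_leq (esym (size_map _ _))).
by apply: uniq_perm => //; exact: iota_uniq.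
Qed.

Lemma big_residues (R : Type) (idx : R) (op : Monoid.com_law idx) (F : nat -> R) :
  \big[op/idx]_(1 <= j < p) F ((j * m) %% p)%N = \big[op/idx]_(1 <= k < p) F k.
Proof. by rewrite -(big_map (fun j => (j * m) %% p)%N xpredT) (perm_big _ perm_residues). Qed.

Lemma p_integral_residue_frac (n j : nat) : (0 < j < p)%N ->
  p_integral p (n%:R / ((j * m) %% p)%:R).
Proof.
move=> hj; rewrite p_integralE rpredM ?rpred_nat // -p_integralE.
exact/p_integralVn/prime_coprime_lt/residue_range.
Qed.

Lemma fermat_quotient_congr :
  rat_congr p (fermat_quotient p m)
    (\sum_(1 <= j < p) ((j * m) %/ p)%:R / ((j * m) %% p)%:R).
Proof.
set x := fun j => ((j * m) %/ p)%:R / ((j * m) %% p)%:R : rat.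
have px : {in index_iota 1 p, forall j, p_integral p (x j)}.
  by move=> j; rewrite mem_index_iota; exact: p_integral_residue_frac.
have [w pw Ew] := prod_1Dp_expansion px.
set L := \prod_(1 <= j < p) (j%:R : rat).
have L_neq0 : L != 0.
  by rewrite prodf_seq_neq0; apply/allP => j; rewrite mem_index_iota pnatr_eq0 -lt0n => /andP[].
have prod_jm_pow : \prod_(1 <= j < p) ((j * m)%N%:R : rat) = m%:R ^+ p.-1 * L.
  rewrite -subn1 -prodr_const_nat -big_split; apply: eq_bigr => j _.
  by rewrite natrM mulrC.
have prod_jm_res : \prod_(1 <= j < p) ((j * m)%N%:R : rat) =
    L * \prod_(1 <= j < p) (1 + p%:R * x j).
  rewrite /L -(big_residues _ (fun k => k%:R)) -big_split; apply: eq_big_nat => j hj /=.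
  rewrite {1}(divn_eq (j * m) p) natrD natrM /x.
  by field; rewrite pnatr_eq0 -lt0n residue_gt0.
have pow_expansion : m%:R ^+ p.-1 = 1 + p%:R * \sum_(1 <= j < p) x j + p%:R ^+ 2 * w.
  by apply: (mulIf L_neq0); rewrite -prod_jm_pow prod_jm_res -Ew mulrC.
have -> : fermat_quotient p m = \sum_(1 <= j < p) x j + p%:R * w.
  by rewrite /fermat_quotient pow_expansion; field; rewrite pnatr_eq0 -lt0n prime_gt0.
apply: rat_congr_addr => //; rewrite big_seq; apply: rpred_sum => j.
exact: px.
Qed.

Lemma sum_next_multiple j : (0 < m)%N -> (0 < j < p)%N ->
  \sum_(1 <= r < m.+1) \sum_(1 <= k < p | (j * m + k == r * p)%N) (r%:R / k%:R : rat)
  = ((j * m) %/ p).+1%:R / (p - (j * m) %% p)%N%:R.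
Proof.
move=> m0 hj; set f := ((j * m) %/ p)%N; set rho := ((j * m) %% p)%N.
have rho_range : (0 < rho < p)%N by exact: residue_range.
have f_lt_m : (f < m)%N by rewrite ltn_divLR ?prime_gt0 // mulnC ltn_mul2l m0; case/andP: hj.
have pairE r k : (0 < k < p)%N -> (j * m + k == r * p)%N = (r == f.+1) && (k == p - rho)%N.
  by move=> hk; rewrite {1}(divn_eq (j * m) p) eq_next_multiple.
transitivity (\sum_(1 <= r < m.+1 | r == f.+1) (r%:R / (p - rho)%N%:R : rat)).
  rewrite [RHS]big_mkcond; apply: eq_big_nat => r _ /=; case: eqP => [->|ne_r].
    by apply: big_nat_pred1 => [|k hk]; rewrite ?pairE ?eqxx //; lia.
  by rewrite big_nat_cond big1 // => k /andP[/pairE -> /andP[/eqP]].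
by rewrite big_nat1_eq !ltnS f_lt_m.
Qed.

Lemma sum_mul_Kp : (0 < m)%N ->
  \sum_(1 <= r < m.+1) r%:R * Kp p r m
  = \sum_(1 <= j < p) ((j * m) %/ p).+1%:R / (p - (j * m) %% p)%N%:R.
Proof.
move=> m0.
transitivity (\sum_(1 <= r < m.+1) \sum_(1 <= k < p) \sum_(1 <= j < p)
                 (if (j * m + k == r * p)%N then r%:R / k%:R else 0 : rat)).
  apply: eq_big_nat => r hr; rewrite Kp_quotient_sum // mulr_sumr.
  by apply: eq_bigr => k _; rewrite mulr_sumr -big_mkcond.
under eq_bigr do rewrite exchange_big_nat.
rewrite exchange_big_nat; apply: eq_big_nat => j hj.
by rewrite -sum_next_multiple //; apply: eq_bigr => r _; rewrite [RHS]big_mkcond.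
Qed.

End Residues.

Theorem corollary2p2 (p m : nat) :
  prime p -> odd p -> (0 < m)%N -> ~~ (p %| m)%N ->
  rat_congr p (\sum_(1 <= r < m.+1) r%:R * Kp p r m) (- fermat_quotient p m).
Proof.
move=> p_pr p_odd m0 p_ndvd_m; rewrite sum_mul_Kp //.
apply: (@rat_congr_trans _ _
  (\sum_(1 <= j < p) ((j * m) %/ p).+1%:R * - ((j * m) %% p)%:R^-1)).
  apply: rat_congr_sum => j; rewrite mem_index_iota => hj _.
  apply: rat_congrM; first exact/rat_congr_refl/rpred_nat.
  exact/rat_congr_inv_subn/residue_range.
have -> : \sum_(1 <= j < p) ((j * m) %/ p).+1%:R * - ((j * m) %% p)%:R^-1 =
    - \sum_(1 <= j < p) ((j * m) %/ p)%:R / ((j * m) %% p)%:R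
    - \sum_(1 <= j < p) ((j * m) %% p)%:R^-1 :> rat.
  by rewrite -!sumrN -big_split; apply: eq_bigr => j _ /=; rewrite -addn1 natrD; ring.
rewrite -[X in rat_congr _ _ X]subr0; apply: rat_congrD; apply: rat_congrN.
  exact/rat_congr_sym/fermat_quotient_congr.
by rewrite (big_residues p_pr p_ndvd_m _ (fun k => k%:R^-1)); exact: harmonic_sum_congr0.
Qed.
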